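(* Let $B$ be a unital $C^*$-algebra with a $*$-isomorphism $\psi:B\to M_n\otimes B$ satisfying $\psi(1)=I_n\otimes1$, let $A$ be a maximal abelian $*$-subalgebra of $B$, and let $\phi:A\to\mathbb{C}$ be a unital algebra homomorphism extended to a positive contraction $\phi:B\to\mathbb{C}$. Then for every $c\in C$ and $\epsilon>0$ there is $m\ge1$ such that $\|\kappa_m(\phi_m(c))-c\|<\epsilon$.
   Context: $M_n=M_n(\mathbb{C})$, identity $I_n$. Define $\psi_0=\mathrm{id}_B$, $\psi_{m+1}=(\mathrm{id}^{\otimes m}\otimes\psi)\circ\psi_m:B\to M_n^{\otimes(m+1)}\otimes B$. Define $\kappa_m:M_n^{\otimes m}\to B$ by $\kappa_m(x)=\psi_m^{-1}(x\otimes1)$ and let $C$ be the norm closure of $\bigcup_{m\ge1}\kappa_m(M_n^{\otimes m})$. For $m\ge1$, $\phi_m=(\mathrm{id}^{\otimes m}\otimes\phi)\circ\psi_m:B\to M_n^{\otimes m}$. *)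

From HB Require Import structures.
From mathcomp Require Import all_boot all_order all_algebra.
From mathcomp Require Import reals.
From mathcomp Require Import complex.
Set Implicit Arguments. Unset Strict Implicit. Unset Printing Implicit Defensive.
Import Order.TTheory GRing.Theory Num.Theory.
Local Open Scope ring_scope.
Local Open Scope complex_scope.

Section CStar.
Variable R : realType.
Local Notation C := R[i].
Variable B : algType C.

Definition is_involution (star : B -> B) : Prop :=
  [/\ (forall x y, star (x + y) = star x + star y),
      (forall (a : C) x, star (a *: x) = (conjc a) *: star x),
      (forall x y, star (x * y) = star y * star x)
    & (forall x, star (star x) = x)].

Definition is_norm (nrm : B -> R) : Prop :=
  [/\ (forall x, 0 <= nrm x),
      (forall x, nrm x = 0 -> x = 0),
      (forall x y, nrm (x + y) <= nrm x + nrm y)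
    & (forall (a : C) x, (nrm (a *: x))%:C = `|a| * (nrm x)%:C)].

Definition is_complete (nrm : B -> R) : Prop :=
  forall u : nat -> B,
    (forall e : R, 0 < e -> exists N : nat, forall p q : nat,
        (N <= p)%N -> (N <= q)%N -> nrm (u p - u q) < e) ->
    exists l : B, forall e : R, 0 < e -> exists N : nat,
        forall p : nat, (N <= p)%N -> nrm (u p - l) < e.

Definition is_unital_cstar (star : B -> B) (nrm : B -> R) : Prop :=
  [/\ is_involution star, is_norm nrm,
      (forall x y, nrm (x * y) <= nrm x * nrm y),
      (forall x, nrm (star x * x) = nrm x ^+ 2)
    & is_complete nrm].

(* M_n (x) B is identified with n x n matrices over B; its involution is the
   entrywise-star conjugate transpose. *)
Definition mx_star (n : nat) (star : B -> B) (M : 'M[B]_n) : 'M[B]_n :=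
  \matrix_(i, j) star (M j i).

Definition is_star_iso (n : nat) (star : B -> B)
    (psi : B -> 'M[B]_n) (psiinv : 'M[B]_n -> B) : Prop :=
  [/\ ((forall x y, psi (x + y) = psi x + psi y) /\
       (forall (a : C) x, psi (a *: x) = map_mx (fun y : B => a *: y) (psi x))),
      (forall x y, psi (x * y) = psi x *m psi y),
      (forall x, psi (star x) = mx_star star (psi x)),
      (cancel psi psiinv /\ cancel psiinv psi)
    & psi 1 = 1%:M].

Definition star_subalg (star : B -> B) (A : B -> Prop) : Prop :=
  [/\ A 0,
      (forall x y, A x -> A y -> A (x + y)),
      (forall (a : C) x, A x -> A (a *: x)),
      (forall x y, A x -> A y -> A (x * y))
    & (forall x, A x -> A (star x))].

Definition abelian_star_subalg (star : B -> B) (A : B -> Prop) : Prop :=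
  star_subalg star A /\ (forall x y, A x -> A y -> x * y = y * x).

Definition masa (star : B -> B) (A : B -> Prop) : Prop :=
  abelian_star_subalg star A /\
  (forall A' : B -> Prop, abelian_star_subalg star A' ->
     (forall x, A x -> A' x) -> forall x, A' x -> A x).

Definition pos_contraction (star : B -> B) (nrm : B -> R) (phi : B -> C) : Prop :=
  [/\ (forall x y, phi (x + y) = phi x + phi y),
      (forall (a : C) x, phi (a *: x) = a * phi x),
      (forall x, 0 <= phi (star x * x))
    & (forall x, `|phi x| <= (nrm x)%:C)].

Definition unital_hom_on (A : B -> Prop) (phi : B -> C) : Prop :=
  phi 1 = 1 /\ (forall x y, A x -> A y -> phi (x * y) = phi x * phi y).

(* Multi-indices for M_n^{(x) m}: idx 0 = unit, idx (m+1) = idx m * 'I_n;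
   the new tensor factor is the last one (just before B).
   An element of M_n^{(x) m} (x) X is a function idx m -> idx m -> X. *)
Fixpoint idx (n m : nat) : Type :=
  if m is m'.+1 then (idx n m' * 'I_n)%type else unit.

(* psi_0 = id, psi_{m+1} = (id^{(x) m} (x) psi) o psi_m. *)
Fixpoint psi_it (n : nat) (psi : B -> 'M[B]_n) (m : nat) :
    B -> idx n m -> idx n m -> B :=
  match m return B -> idx n m -> idx n m -> B with
  | 0 => fun b _ _ => b
  | m'.+1 => fun b ik jl => psi (@psi_it n psi m' b ik.1 jl.1) ik.2 jl.2
  end.

(* psi_m^{-1}: psi_0^{-1} = id, psi_{m+1}^{-1} = psi_m^{-1} o (id^{(x) m} (x) psi^{-1}). *)
Fixpoint psi_it_inv (n : nat) (psiinv : 'M[B]_n -> B) (m : nat) :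
    (idx n m -> idx n m -> B) -> B :=
  match m return (idx n m -> idx n m -> B) -> B with
  | 0 => fun X => X tt tt
  | m'.+1 => fun X =>
      @psi_it_inv n psiinv m' (fun i j => psiinv (\matrix_(k, l) X (i, k) (j, l)))
  end.

(* kappa_m (x) = psi_m^{-1} (x (x) 1) *)
Definition kappa (n : nat) (psiinv : 'M[B]_n -> B) (m : nat)
    (x : idx n m -> idx n m -> C) : B :=
  @psi_it_inv n psiinv m (fun i j => x i j *: 1).

(* phi_m = (id^{(x) m} (x) phi) o psi_m : B -> M_n^{(x) m} *)
Definition phi_it (n : nat) (psi : B -> 'M[B]_n) (phi : B -> C) (m : nat)
    (b : B) : idx n m -> idx n m -> C :=
  fun i j => phi (@psi_it n psi m b i j).

Arguments psi_it {n} psi m b _ _.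
Arguments psi_it_inv {n} psiinv m X.
Arguments kappa {n} psiinv m x.
Arguments phi_it {n} psi phi m b _ _.

(* C = norm closure of the union over m >= 1 of kappa_m (M_n^{(x) m}). *)
Definition in_C (nrm : B -> R) (n : nat) (psiinv : 'M[B]_n -> B) (c : B) : Prop :=
  forall e : R, 0 < e -> exists m : nat, (1 <= m)%N /\
    exists x : idx n m -> idx n m -> C, nrm (kappa psiinv m x - c) < e.

End CStar.

Arguments psi_it {R B n} psi m b _ _.
Arguments psi_it_inv {R B n} psiinv m X.
Arguments kappa {R B n} psiinv m x.
Arguments phi_it {R B n} psi phi m b _ _.

From HB Require Import structures.
From mathcomp Require Import all_boot all_order all_algebra.
From mathcomp Require Import reals.
From mathcomp Require Import complex.
From mathcomp Require Import ring lra.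
Import Order.TTheory GRing.Theory Num.Theory.
Local Open Scope ring_scope.
Local Open Scope complex_scope.
Local Open Scope sesquilinear_scope.

(* Let [E = kappa_m o phi_m].  Through the iterated isomorphism [psi_m], [B] is
   a matrix algebra over itself, and [E] applies [phi] entrywise and re-embeds
   the resulting scalar matrix.  Hence [E] fixes [kappa_m (M_n^(x)m)], so for
   [d = kappa_m x] with [|d - c| < e/2] we get [|E c - c| <= |E (c - d)| + |d - c|],
   and it remains to see that [E] is contractive.  For the scalar matrix
   [L = (phi b_ij)], [<eta, L xi>] is the value at [l b r] of the state
   [z |-> phi (psi(z)_00)], where [|l| <= |eta|] and [|r| <= |xi|]; states are
   contractive (via square roots of [1 - a] for self-adjoint [|a| < 1]), so
   [|<eta, L xi>| <= |b| |eta| |xi|], and the C*-identity applied to powers of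
   [L^* L] turns this into [|E b| <= |b|]. *)

Lemma realcM {R : realType} (a b : R) : (a * b)%:C = a%:C * b%:C :> R[i].
Proof. exact: rmorphM. Qed.

Lemma realcX {R : realType} (a : R) k : (a ^+ k)%:C = a%:C ^+ k :> R[i].
Proof. exact: rmorphXn. Qed.

Lemma bernoulli_ineq {R : realType} (x : R) (k : nat) :
  0 <= x -> 1 + x *+ k <= (1 + x) ^+ k.
Proof.
move=> x0; elim: k => [|k IHk]; first by rewrite expr0 mulr0n addr0.
rewrite exprS mulrS.
have x1 : 0 <= 1 + x by lra.
have := ler_wpM2l x1 IHk.
have : 0 <= x * x *+ k by rewrite mulrn_wge0 // mulr_ge0.
rewrite mulrDr mulr1 mulrDl mul1r -mulrnAr.
lra.
Qed.

Lemma exists_exprn_lt {R : realType} {t e : R} :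
  0 <= t -> t < 1 -> 0 < e -> exists N, t ^+ N < e.
Proof.
move=> t0 t1 e0.
have [->|tn0] := eqVneq t 0; first by exists 1%N; rewrite expr1.
have tp : 0 < t by rewrite lt_neqAle eq_sym tn0.
set u := t^-1 - 1.
have up : 0 < u by rewrite /u subr_gt0 invf_gt1.
have eup : 0 < (e * u)^-1 by rewrite invr_gt0 mulr_gt0.
set N := Num.Def.archi_bound (e * u)^-1.
exists N.
have N_gt : 1 < e * (u *+ N).
  rewrite -mulr_natr mulrA -(ltr_pM2l eup) mulr1 mulrA mulVf ?mul1r ?gt_eqF ?mulr_gt0 //.
  exact: archi_boundP (ltW eup).
have tN : 1 + u *+ N <= (t ^+ N)^-1.
  by rewrite -exprVn (_ : t^-1 = 1 + u) ?bernoulli_ineq ?ltW // /u addrC subrK.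
have tNp : 0 < t ^+ N by rewrite exprn_gt0.
rewrite -(ltr_pM2r (_ : 0 < (t ^+ N)^-1)) ?invr_gt0 // divff ?gt_eqF //.
nra.
Qed.

Lemma ler_of_exp2n {R : realType} {a b c : R} : 0 <= a -> 0 <= b -> 0 <= c ->
  (forall k, a ^+ (2 ^ k) <= c * b ^+ (2 ^ k)) -> a <= b.
Proof.
move=> a0 b0 c0 hab; rewrite leNgt; apply/negP => ba.
have ap : 0 < a := le_lt_trans b0 ba.
set t := b / a.
have t0 : 0 <= t by rewrite divr_ge0 // ltW.
have t1 : t < 1 by rewrite ltr_pdivrMr // mul1r.
have c1 : 0 < (c + 1)^-1 by rewrite invr_gt0; lra.
have [M tM] := exists_exprn_lt t0 t1 c1.
set K := (2 ^ M)%N.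
have tK : t ^+ K <= t ^+ M.
  by rewrite ler_wiXn2l // ?ltW // ltnW // ltn_expl.
have eb : b = t * a by rewrite /t mulrVK // unitfE gt_eqF.
clearbody t; subst b.
have := hab M; rewrite -/K exprMn mulrA -[X in X <= _]mul1r ler_pM2r ?exprn_gt0 // => ctK.
have : c * t ^+ K <= c * (c + 1)^-1 by rewrite ler_wpM2l // (le_trans tK) // ltW.
have : c * (c + 1)^-1 < 1 by rewrite ltr_pdivrMr ?mul1r; lra.
lra.
Qed.

Section ColumnNorm.
Context {C : numClosedFieldType} {N : nat}.

Lemma trmxC_delta {m n} (i : 'I_m) (j : 'I_n) :
  (delta_mx i j : 'M[C]_(m, n))^t* = delta_mx j i.
Proof. by apply/matrixP => k l; rewrite !mxE conjC_nat andbC. Qed.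

Definition cnorm2 (v : 'cV[C]_N) : C := (v^t* *m v) 0 0.

Lemma cnorm2E v : cnorm2 v = \sum_k `|v k 0| ^+ 2.
Proof. by rewrite /cnorm2 mxE; apply: eq_bigr => k _; rewrite !mxE normCK mulrC. Qed.

Lemma cnorm2_ge0 v : 0 <= cnorm2 v.
Proof. by rewrite cnorm2E sumr_ge0 // => k _; rewrite exprn_ge0. Qed.

Lemma ler_entry_cnorm2 (v : 'cV[C]_N) i : `|v i 0| ^+ 2 <= cnorm2 v.
Proof. by rewrite cnorm2E (bigD1 i) //= lerDl sumr_ge0 // => k _; rewrite exprn_ge0. Qed.

Lemma cnorm2_delta j : cnorm2 (delta_mx j 0) = 1.
Proof.
rewrite cnorm2E (bigD1 j) //= big1 ?addr0 => [|k /negbTE kj].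
  by rewrite mxE !eqxx normr1 expr1n.
by rewrite mxE kj normr0 expr0n.
Qed.

Definition mx_bounded (A : 'M[C]_N) (c : C) :=
  forall v, cnorm2 (A *m v) <= c * cnorm2 v.

Lemma mx_boundedM {A A' c c'} : 0 <= c ->
  mx_bounded A c -> mx_bounded A' c' -> mx_bounded (A *m A') (c * c').
Proof.
move=> c0 Ac A'c' v; rewrite -mulmxA (le_trans (Ac _)) // -mulrA.
exact: ler_wpM2l.
Qed.

Lemma mx_boundedX {A c} k : 0 <= c -> mx_bounded A c -> mx_bounded (A ^+ k) (c ^+ k).
Proof.
move=> c0 Ac; elim: k => [|k IHk] v; first by rewrite !expr0 mul1r mul1mx.
by rewrite !exprS -mulmxE; apply: mx_boundedM.
Qed.

Lemma mx_bounded_entry {A c} i j : mx_bounded A c -> `|A i j| ^+ 2 <= c.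
Proof.
move=> /(_ (delta_mx j 0)); rewrite cnorm2_delta mulr1; apply: le_trans.
by have := ler_entry_cnorm2 (A *m delta_mx j 0) i; rewrite -colE mxE.
Qed.

Lemma mx_bounded_form {A : 'M[C]_N} {c : C} : 0 <= c ->
  (forall eta xi, `|(eta^t* *m A *m xi) 0 0| ^+ 2 <= c * cnorm2 eta * cnorm2 xi) ->
  mx_bounded A c /\ mx_bounded (A^t*) c.
Proof.
move=> c0 form.
have cancel_sq (u v : C) : 0 <= u -> 0 <= v -> u ^+ 2 <= c * v * u -> u <= c * v.
  move=> u0 v0 uv; have [->|un0] := eqVneq u 0; first by rewrite mulr_ge0.
  have up : 0 < u by rewrite lt_neqAle eq_sym un0.
  by rewrite -(ler_pM2l up) -expr2 [u * _]mulrC.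
split=> v; apply: cancel_sq; rewrite ?cnorm2_ge0 //.
  have := form (A *m v) v; rewrite -mulmxA ger0_norm ?cnorm2_ge0 //.
  by rewrite mulrAC.
have := form v (A^t* *m v).
rewrite (_ : v^t* *m A = (A^t* *m v)^t*) ?ger0_norm ?cnorm2_ge0 //.
by rewrite trmx_mul map_mxM trmxCK.
Qed.

End ColumnNorm.

(* [idx n m] is only a [Type]; [idx_fin n m] is the same nested product,
   equipped with its [finType] structure. *)
Fixpoint idx_fin (n m : nat) : finType :=
  if m is m'.+1 then Finite.clone (idx_fin n m' * 'I_n)%type _
  else Finite.clone unit _.

Fixpoint idx_of_fin n m : idx_fin n m -> idx n m :=
  match m with
  | 0 => fun _ => tt
  | m'.+1 => fun p => (idx_of_fin n m' p.1, p.2)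
  end.

Fixpoint fin_of_idx n m : idx n m -> idx_fin n m :=
  match m with
  | 0 => fun _ => tt
  | m'.+1 => fun p => (fin_of_idx n m' p.1, p.2)
  end.

Arguments idx_of_fin {n m}.
Arguments fin_of_idx {n m}.

Lemma idx_of_finK n m : cancel (@idx_of_fin n m) (@fin_of_idx n m).
Proof. by elim: m => [|m IHm] [] //= t a; rewrite IHm. Qed.

Lemma fin_of_idxK n m : cancel (@fin_of_idx n m) (@idx_of_fin n m).
Proof. by elim: m => [|m IHm] [] //= t a; rewrite IHm. Qed.

Section Constructions.
Context {R : realType} {B : algType R[i]}.

Definition nrm_cvg (nrm : B -> R) (u : nat -> B) (l : B) :=
  forall e, 0 < e -> exists N, forall p, (N <= p)%N -> nrm (u p - l) < e.

Definition is_state (star : B -> B) (w : B -> R[i]) :=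
  [/\ forall x y, w (x + y) = w x + w y, forall (a : R[i]) x, w (a *: x) = a * w x,
      w 1 = 1 & forall x, 0 <= w (star x * x)].

Definition embedmx {N} (Phi : 'M[B]_N -> B) (Q : 'M[R[i]]_N) : B :=
  Phi (map_mx (in_alg B) Q).

Definition cond_exp {N} (Ph : B -> 'M[B]_N) (Phi : 'M[B]_N -> B) (phi : B -> R[i]) b :=
  Phi (map_mx (fun x => (phi x)%:A) (Ph b)).

Definition psi_mx {n} (psi : B -> 'M[B]_n) m (b : B) : 'M[B]_#|idx_fin n m| :=
  \matrix_(i, j) psi_it psi m b (idx_of_fin (enum_val i)) (idx_of_fin (enum_val j)).

Definition psi_mx_inv {n} (psiinv : 'M[B]_n -> B) m (M : 'M[B]_#|idx_fin n m|) : B :=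
  psi_it_inv psiinv m (fun i j => M (enum_rank (fin_of_idx i)) (enum_rank (fin_of_idx j))).

End Constructions.

Section CStarAlgebra.
Context {R : realType} {B : algType R[i]} {star : B -> B} {nrm : B -> R}.
Local Notation C := R[i].
Hypothesis cstar : is_unital_cstar star nrm.

Lemma starD x y : star (x + y) = star x + star y.
Proof. by case: cstar => -[]. Qed.
Lemma starZ (a : C) x : star (a *: x) = conjc a *: star x.
Proof. by case: cstar => -[]. Qed.
Lemma starM x y : star (x * y) = star y * star x.
Proof. by case: cstar => -[]. Qed.
Lemma starK : involutive star.
Proof. by case: cstar => -[]. Qed.
Lemma nrm_ge0 x : 0 <= nrm x.
Proof. by case: cstar => _ [h _ _ _]. Qed.
Lemma nrm_eq0 x : nrm x = 0 -> x = 0.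
Proof. by case: cstar => _ [_ h _ _] *; apply: h. Qed.
Lemma nrmD x y : nrm (x + y) <= nrm x + nrm y.
Proof. by case: cstar => _ [_ _ h _]. Qed.
Lemma nrmM x y : nrm (x * y) <= nrm x * nrm y.
Proof. by case: cstar => _ _ h. Qed.
Lemma nrm_cstar x : nrm (star x * x) = nrm x ^+ 2.
Proof. by case: cstar => _ _ _ h. Qed.

Lemma RRe_normc (a : C) : (complex.Re `|a|)%:C = `|a|.
Proof. by rewrite normc_def. Qed.

Lemma nrmZ (a : C) x : nrm (a *: x) = complex.Re `|a| * nrm x.
Proof.
apply: complexI; case: cstar => _ [_ _ _ nrmZC] _ _ _.
by rewrite nrmZC rmorphM normc_def.
Qed.

Lemma Re_normc_real (r : R) : complex.Re `|r%:C| = `|r|.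
Proof. by rewrite normc_def /= expr0n /= addr0 sqrtr_sqr. Qed.

Lemma nrmZ_real (r : R) x : nrm (r%:C *: x) = `|r| * nrm x.
Proof. by rewrite nrmZ Re_normc_real. Qed.

Lemma nrm0 : nrm 0 = 0.
Proof. by rewrite -(scale0r (0 : B)) nrmZ normr0 mul0r. Qed.

Lemma nrmN x : nrm (- x) = nrm x.
Proof. by rewrite -scaleN1r nrmZ normrN1 mul1r. Qed.

Lemma nrmB x y : nrm (x - y) = nrm (y - x).
Proof. by rewrite -nrmN opprB. Qed.

Lemma nrm_sum (I : Type) (r : seq I) (F : I -> B) :
  nrm (\sum_(i <- r) F i) <= \sum_(i <- r) nrm (F i).
Proof.
elim: r => [|a r IHr]; first by rewrite !big_nil nrm0.
by rewrite !big_cons (le_trans (nrmD _ _)) // lerD.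
Qed.

Lemma nrm_small_eq0 x : (forall e, 0 < e -> nrm x < e) -> x = 0.
Proof.
move=> small; apply: nrm_eq0; apply/eqP; rewrite eq_le nrm_ge0 andbT.
by apply/ler_addgt0Pr => e /small /ltW; rewrite add0r.
Qed.

Lemma nrm_star x : nrm (star x) = nrm x.
Proof.
have le_star y : nrm y <= nrm (star y).
  have [->|yn0] := eqVneq (nrm y) 0; first exact: nrm_ge0.
  have yp : 0 < nrm y by rewrite lt_neqAle eq_sym yn0 nrm_ge0.
  by rewrite -(ler_pM2r yp) -expr2 -nrm_cstar nrmM.
by apply/eqP; rewrite eq_le le_star andbT; rewrite -{2}[x]starK le_star.
Qed.

Lemma star1 : star 1 = 1.
Proof. by rewrite -[star 1]mulr1 -{2}[1]starK -starM mulr1 starK. Qed.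

Lemma star_is_zmod_morphism : zmod_morphism star.
Proof.
move=> x y; rewrite starD; congr (_ + _).
by rewrite -scaleN1r starZ rmorphN1 scaleN1r.
Qed.

HB.instance Definition _ := GRing.isZmodMorphism.Build B B star star_is_zmod_morphism.

Lemma starB x y : star (x - y) = star x - star y.
Proof. exact: raddfB. Qed.

Lemma nrm_selfadjoint_exp2n x k : star x = x -> nrm (x ^+ (2 ^ k)) = nrm x ^+ (2 ^ k).
Proof.
move=> sx; have sxn j : star (x ^+ j) = x ^+ j.
  by elim: j => [|j IHj]; rewrite ?star1 // exprS starM IHj sx -exprSr exprS.
elim: k => [|k IHk]; first by rewrite !expr1.
by rewrite expnSr !exprM -IHk -nrm_cstar sxn expr2.
Qed.

Lemma nrm_proj p : star p = p -> p * p = p -> nrm p <= 1.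
Proof.
move=> sp pp; have := nrm_cstar p; rewrite sp pp expr2.
have [->|pn0] := eqVneq (nrm p) 0; first by rewrite ler01.
by rewrite -{1}[nrm p]mulr1 => /(mulfI pn0) <-.
Qed.

Lemma nrm_sqrB {x y : B} {t : R} : nrm x <= t -> nrm y <= t ->
  nrm (x * x - y * y) <= 2%:R * t * nrm (x - y).
Proof.
move=> xt yt.
have -> : x * x - y * y = x * (x - y) + (x - y) * y.
  by rewrite mulrBr mulrBl addrA subrK.
apply: le_trans (nrmD _ _) _.
have := nrmM x (x - y); have := nrmM (x - y) y.
have := nrm_ge0 (x - y); have := nrm_ge0 x; have := nrm_ge0 y.
nra.
Qed.

Lemma nrm_cvg_unique u l l' : nrm_cvg nrm u l -> nrm_cvg nrm u l' -> l = l'.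
Proof.
move=> ul ul'; apply/eqP; rewrite -subr_eq0; apply/eqP/nrm_small_eq0 => e e0.
have e2 : 0 < e / 2 by rewrite divr_gt0.
have [N1 uN1] := ul _ e2; have [N2 uN2] := ul' _ e2.
have := uN1 _ (leq_maxl N1 N2); have := uN2 _ (leq_maxr N1 N2).
have := nrmD (l - u (maxn N1 N2)) (u (maxn N1 N2) - l').
rewrite addrA subrK (nrmB l (u _)); lra.
Qed.

Lemma nrm_cvg_selfadjoint {u l} :
  (forall k, star (u k) = u k) -> nrm_cvg nrm u l -> star l = l.
Proof.
move=> su ul; apply: (nrm_cvg_unique u) => // e /ul [N uN].
by exists N => p Np; rewrite -su -starB nrm_star uN.
Qed.

Lemma nrm_cvg_fixpoint {f : B -> B} {K : R} {u l} : 0 <= K ->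
  (forall k, u k.+1 = f (u k)) ->
  (forall k, nrm (f (u k) - f l) <= K * nrm (u k - l)) ->
  nrm_cvg nrm u l -> f l = l.
Proof.
move=> K0 uS f_lip ul; apply: (nrm_cvg_unique (fun k => u k.+1)).
  move=> e e0; have eK : 0 < e / (K + 1) by rewrite divr_gt0 //; lra.
  have [N uN] := ul _ eK; exists N => p Np; rewrite uS.
  apply: le_lt_trans (f_lip p) _.
  have := uN _ Np; rewrite ltr_pdivlMr; last by lra.
  have := nrm_ge0 (u p - l); nra.
by move=> e /ul [N uN]; exists N => p Np; apply/uN/leqW.
Qed.

Lemma nrm_cvg_geometric {u t} : 0 <= t -> t < 1 ->
  (forall k, nrm (u k.+1 - u k) <= t ^+ k) -> exists l, nrm_cvg nrm u l.
Proof.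
move=> t0 t1 step; have t1' : 0 < 1 - t by lra.
have tail p k : nrm (u (k + p)%N - u k) * (1 - t) <= t ^+ k - t ^+ (k + p).
  elim: p => [|p IHp]; first by rewrite addn0 !subrr nrm0 mul0r.
  have := nrmD (u (k + p).+1 - u (k + p)%N) (u (k + p)%N - u k).
  rewrite addrA subrK addnS exprS => tri.
  have := ler_wpM2r (ltW t1') tri.
  have := step (k + p)%N; have := nrm_ge0 (u (k + p).+1 - u (k + p)%N); nra.
have near_u p k : (k <= p)%N -> nrm (u p - u k) * (1 - t) <= t ^+ k.
  move=> kp; rewrite -(subnKC kp); apply: le_trans (tail _ _) _.
  by rewrite lerBlDr lerDl exprn_ge0.
case: cstar => _ _ _ _; apply => e e0.
have e' : 0 < e / 2 * (1 - t) by rewrite mulr_gt0 ?divr_gt0 //; lra.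
have [N tN] := exists_exprn_lt t0 t1 e'.
have near_N p : (N <= p)%N -> nrm (u p - u N) < e / 2.
  move=> Np; rewrite -(ltr_pM2r t1').
  exact: le_lt_trans (near_u _ _ Np) tN.
exists N => p q Np Nq; have := near_N _ Np; have := near_N _ Nq.
have := nrmD (u p - u N) (u N - u q); rewrite addrA subrK (nrmB (u N)); lra.
Qed.

Local Notation half := ((2 : R)^-1)%:C.

Lemma scale_halfD (y : B) : half *: y + half *: y = y.
Proof. by rewrite -scalerDl -rmorphD (_ : 2^-1 + 2^-1 = 1 :> R) ?scale1r //; lra. Qed.

(* The square root of [1 - a] is [1 - l], where [l] is the fixed point of the
   contraction [v |-> (a + v^2)/2] on the ball of radius [(1 + nrm a)/2]. *)
Lemma one_sub_selfadjoint_eq {a} : star a = a -> nrm a < 1 ->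
  exists s, star s * s = 1 - a.
Proof.
move=> sa a1; set t := (1 + nrm a) / 2.
have t0 : 0 <= t by have := nrm_ge0 a; rewrite /t; lra.
have t1 : t < 1 by rewrite /t; lra.
have nrm_half x : nrm (half *: x) = 2^-1 * nrm x.
  by rewrite nrmZ_real ger0_norm // invr_ge0 ler0n.
pose f v := half *: (a + v * v).
pose u k := iter k f 0.
have u_le k : nrm (u k) <= t.
  elim: k => [|k IHk]; first by rewrite nrm0.
  rewrite /= nrm_half; have := nrmD a (u k * u k); have := nrmM (u k) (u k).
  have := ler_pM (nrm_ge0 (u k)) (nrm_ge0 (u k)) IHk IHk.
  have : t * t <= t by rewrite ler_piMr // ltW.
  rewrite /t; have := nrm_ge0 a; lra.
have u_sa k : star (u k) = u k.
  elim: k => [|k IHk]; first exact: raddf0.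
  by rewrite /= starZ conjc_real starD starM IHk sa.
have u_step k : nrm (u k.+1 - u k) <= t ^+ k.
  elim: k => [|k IHk]; first by rewrite /u /f /= subr0 mul0r addr0 nrm_half /t; lra.
  have -> : u k.+2 - u k.+1 = half *: (u k.+1 * u k.+1 - u k * u k).
    by rewrite [u k.+2]/= [u k.+1 in LHS]/= -scalerBr opprD addrACA subrr add0r.
  rewrite nrm_half exprS; have := nrm_sqrB (u_le k.+1) (u_le k).
  have := nrm_ge0 (u k.+1 * u k.+1 - u k * u k); nra.
have [l ul] := nrm_cvg_geometric t0 t1 u_step.
have fl : f l = l.
  have K0 : 0 <= t + nrm l by rewrite addr_ge0 ?nrm_ge0.
  apply: (nrm_cvg_fixpoint (f := f) K0 (fun k => erefl) _ ul) => k.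
  have uk : nrm (u k) <= t + nrm l by have := u_le k; have := nrm_ge0 l; lra.
  have ll : nrm l <= t + nrm l by rewrite lerDr.
  rewrite /f -scalerBr opprD addrACA subrr add0r nrm_half.
  have := nrm_sqrB uk ll; lra.
have sl : star l = l := nrm_cvg_selfadjoint u_sa ul.
exists (1 - l).
have twice : l + l = a + l * l by rewrite -{1 2}fl /f scale_halfD.
rewrite starB star1 sl mulrBr mulr1 mulrBl mul1r.
rewrite -[a](addrK (l * l)) -twice.
by rewrite !opprB !addrA opprD addrA [1 - l + _]addrAC.
Qed.

Section State.
Variable w : B -> C.
Hypothesis w_state : is_state star w.

Lemma state_selfadjoint_real {h} : star h = h -> w h \is Num.real.
Proof.
case: w_state => wD _ w1 w_ge0 sh.
have := w_ge0 (1 + h); rewrite starD star1 sh mulrDl !mulrDr !mul1r mulr1 !wD w1.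
move/ger0_real => r1; have /ger0_real := w_ge0 h; rewrite sh => r2.
have r3 : w h + w h \is Num.real.
  have -> : w h + w h = (1 + w h + (w h + w (h * h))) - 1 - w (h * h) by ring.
  by rewrite !rpredB ?rpred1.
have -> : w h = (w h + w h) / 2%:R by field; rewrite ?pnatr_eq0.
by rewrite rpredM // rpredV rpred_nat.
Qed.

(* Positivity of [w] at [s^* s = 1 - h / (nrm h + e)], with [s] from
   [one_sub_selfadjoint_eq]. *)
Lemma state_selfadjoint_le {h} : star h = h -> w h <= (nrm h)%:C.
Proof.
case: w_state => wD wZ w1 w_ge0 sh; have hr := state_selfadjoint_real sh.
suff wh_le e : 0 < e -> w h <= (nrm h + e)%:C.
  rewrite -(RRe_real hr) lecR; apply/ler_addgt0Pr => e /wh_le.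
  by rewrite -(RRe_real hr) lecR.
move=> e0; set c := nrm h + e.
have c0 : 0 < c by rewrite /c; have := nrm_ge0 h; lra.
set a := (c^-1)%:C *: h.
have sa : star a = a by rewrite /a starZ conjc_real sh.
have a1 : nrm a < 1.
  by rewrite /a nrmZ_real ger0_norm ?invr_ge0 ?ltW // ltr_pdivrMl // mulr1 ltrDl.
have [s ss] := one_sub_selfadjoint_eq sa a1.
have := w_ge0 s; rewrite ss wD -scaleN1r wZ w1 mulN1r subr_ge0 /a wZ fmorphV.
by move=> le1; rewrite -[c%:C]mulr1 -ler_pdivrMl // -[0]/(0%:C) ltcR.
Qed.

(* Rotate [x] so that [w x] becomes [`|w x|], then take the hermitian part. *)
Lemma normr_state_le x : `|w x| <= (nrm x)%:C.
Proof.
case: w_state => wD wZ _ _.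
have [->|wx0] := eqVneq (w x) 0; first by rewrite normr0 ler0c nrm_ge0.
set mu := `|w x| / w x.
have mu1 : `|mu| = 1 by rewrite normrM normfV normr_id divff // normr_eq0.
set y := mu *: x.
have wy : w y = `|w x| by rewrite wZ mulrAC -mulrA divff // mulr1.
set h := half *: (y + star y).
set k := (half * - 'i%C) *: (y - star y).
have sh : star h = h by rewrite starZ conjc_real starD starK addrC.
have sk : star k = k.
  have conj_coef : conjc (half * - 'i%C) = - (half * - 'i%C) by apply/eqP; simpc.
  by rewrite starZ conj_coef starB starK scaleNr -scalerN opprB.
have yE : h + 'i%C *: k = y.
  rewrite scalerA mulrCA mulrN -expr2 sqr_i opprK mulr1 -scalerDr.
  by rewrite addrACA subrr addr0 scalerDr scale_halfD.
have hE : h = half *: (y + star y) by [].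
clearbody h k.
have wh : w h = `|w x|.
  have := wy; rewrite -yE wD wZ -(RRe_real (state_selfadjoint_real sh)).
  rewrite -(RRe_real (state_selfadjoint_real sk)) normc_def.
  move/eqP; rewrite eq_complex /= !mul0r !mul1r !subr0 !addr0 !add0r.
  by case/andP => /eqP ->.
rewrite -wh; apply: le_trans (state_selfadjoint_le sh) _.
rewrite hE lecR nrmZ_real ger0_norm ?invr_ge0 ?ler0n //.
have := nrmD y (star y); rewrite nrm_star /y nrmZ mu1 /= mul1r; lra.
Qed.

End State.

Section MatrixUnits.
Context {N : nat} {Ph : B -> 'M[B]_N} {Phi : 'M[B]_N -> B}.
Hypothesis iso : is_star_iso star Ph Phi.

Lemma PhD x y : Ph (x + y) = Ph x + Ph y.
Proof. by case: iso => -[]. Qed.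
Lemma PhZ (a : C) x : Ph (a *: x) = map_mx (fun y => a *: y) (Ph x).
Proof. by case: iso => -[]. Qed.
Lemma PhM x y : Ph (x * y) = Ph x *m Ph y.
Proof. by case: iso. Qed.
Lemma Ph_star x : Ph (star x) = mx_star star (Ph x).
Proof. by case: iso. Qed.
Lemma PhK : cancel Ph Phi.
Proof. by case: iso => _ _ _ []. Qed.
Lemma PhiK : cancel Phi Ph.
Proof. by case: iso => _ _ _ []. Qed.
Lemma Ph1 : Ph 1 = 1%:M.
Proof. by case: iso. Qed.

Lemma Ph_inj : injective Ph.
Proof. exact: can_inj PhK. Qed.

Lemma Ph0 : Ph 0 = 0.
Proof. by apply: (addrI (Ph 0)); rewrite -PhD !addr0. Qed.

Lemma Ph_sum (I : Type) (r : seq I) (F : I -> B) :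
  Ph (\sum_(i <- r) F i) = \sum_(i <- r) Ph (F i).
Proof. exact: (big_morph Ph PhD Ph0). Qed.

Lemma Ph_embedmx Q : Ph (embedmx Phi Q) = map_mx (in_alg B) Q.
Proof. exact: PhiK. Qed.

Lemma embedmxM Q1 Q2 : embedmx Phi Q1 * embedmx Phi Q2 = embedmx Phi (Q1 *m Q2).
Proof. by apply: Ph_inj; rewrite PhM !Ph_embedmx map_mxM. Qed.

Lemma embedmx_star Q : star (embedmx Phi Q) = embedmx Phi (Q^t*).
Proof.
apply: Ph_inj; rewrite Ph_star !Ph_embedmx; apply/matrixP => i j.
by rewrite !mxE /= starZ star1.
Qed.

Lemma embedmxD Q1 Q2 : embedmx Phi (Q1 + Q2) = embedmx Phi Q1 + embedmx Phi Q2.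
Proof.
by apply: Ph_inj; rewrite PhD !Ph_embedmx; apply/matrixP => i j; rewrite !mxE rmorphD.
Qed.

Lemma embedmxZ (a : C) Q : embedmx Phi (a *: Q) = a *: embedmx Phi Q.
Proof.
by apply: Ph_inj; rewrite PhZ !Ph_embedmx; apply/matrixP => i j; rewrite !mxE /= scalerA.
Qed.

Lemma embedmx1 : embedmx Phi 1%:M = 1.
Proof. by apply: Ph_inj; rewrite Ph1 Ph_embedmx map_mx1 rmorph1. Qed.

Lemma embedmx_sum (I : Type) (r : seq I) (F : I -> 'M[C]_N) :
  embedmx Phi (\sum_(i <- r) F i) = \sum_(i <- r) embedmx Phi (F i).
Proof.
apply: (big_morph (embedmx Phi) embedmxD).
by rewrite -(scale0r 0) embedmxZ scale0r.
Qed.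

Lemma nrm_embedmx_proj P : P^t* = P -> P *m P = P -> nrm (embedmx Phi P) <= 1.
Proof. by move=> sP PP; apply: nrm_proj; rewrite ?embedmx_star ?embedmxM ?sP ?PP. Qed.

Lemma nrm_embedmx_delta i j : nrm (embedmx Phi (delta_mx i j)) <= 1.
Proof.
have : nrm (embedmx Phi (delta_mx i j)) ^+ 2 <= 1.
  rewrite -nrm_cstar embedmx_star embedmxM trmxC_delta mul_delta_mx.
  by apply: nrm_embedmx_proj; rewrite ?trmxC_delta ?mul_delta_mx.
by rewrite -[X in _ <= X](expr1n _ 2) ler_pXn2r ?nnegrE ?nrm_ge0.
Qed.

Lemma nrm_embedmx_entries (Q : 'M[C]_N) (c : R) : 0 <= c ->
  (forall i j, `|Q i j| <= c%:C) -> nrm (embedmx Phi Q) <= (N * N)%:R * c.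
Proof.
move=> c0 Qc; rewrite {1}(matrix_sum_delta Q) embedmx_sum.
apply: le_trans (nrm_sum _ _ _) _.
rewrite (_ : _ * c = \sum_(i < N) \sum_(j < N) c); last first.
  by rewrite !sumr_const !card_ord -mulrnA mulr_natl.
apply: ler_sum => i _; rewrite embedmx_sum; apply: le_trans (nrm_sum _ _ _) _.
apply: ler_sum => j _; rewrite embedmxZ nrmZ.
have Qij : complex.Re `|Q i j| <= c by rewrite -lecR RRe_normc.
have := nrm_embedmx_delta i j; have := nrm_ge0 (embedmx Phi (delta_mx i j)).
have : 0 <= complex.Re `|Q i j| by rewrite -ler0c RRe_normc.
nra.
Qed.

(* [|X^(2^k)| = |X|^(2^k)] for the self-adjoint [X = embed (L^* L)], while the
   entries of [(L^* L)^(2^k)] stay below [K^(2^(k+1))]; [ler_of_exp2n] then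
   removes the dimension factor [N^2] of [nrm_embedmx_entries]. *)
Lemma nrm_embedmx_le (L : 'M[C]_N) (K : R) : 0 <= K ->
  (forall eta xi,
     `|(eta^t* *m L *m xi) 0 0| ^+ 2 <= (K ^+ 2)%:C * cnorm2 eta * cnorm2 xi) ->
  nrm (embedmx Phi L) <= K.
Proof.
move=> K0 form; set K2 : C := (K ^+ 2)%:C.
have K20 : 0 <= K2 by rewrite ler0c exprn_ge0.
have [LK LTK] := mx_bounded_form K20 form.
set P := L^t* *m L.
have PK : mx_bounded P (K2 * K2) := mx_boundedM K20 LTK LK.
set X := star (embedmx Phi L) * embedmx Phi L.
have XP : X = embedmx Phi P by rewrite /X embedmx_star embedmxM.
have XPn j : X ^+ j = embedmx Phi (P ^+ j).
  elim: j => [|j IHj]; first by rewrite !expr0 embedmx1.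
  by rewrite !exprS IHj XP embedmxM mulmxE.
have bound k : nrm X ^+ (2 ^ k) <= (N * N)%:R * (K ^+ 2) ^+ (2 ^ k).
  rewrite -nrm_selfadjoint_exp2n ?starM ?starK // XPn.
  apply: nrm_embedmx_entries; rewrite ?exprn_ge0 // => i j.
  have PKk := mx_boundedX (2 ^ k) (mulr_ge0 K20 K20) PK.
  rewrite rmorphXn -(ler_pXn2r (_ : 0 < 2)%N) //; last 2 first.
  - exact: normr_ge0.
  - exact: exprn_ge0 K20.
  by rewrite -exprM mulnC exprM; exact: mx_bounded_entry PKk.
have := ler_of_exp2n (nrm_ge0 X) (exprn_ge0 2 K0) (ler0n _ (N * N)) bound.
by rewrite /X nrm_cstar ler_pXn2r ?nnegrE ?nrm_ge0.
Qed.

Section CondExp.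
Context {phi : B -> C}.
Hypothesis phi_state : is_state star phi.

Lemma cond_expE b : cond_exp Ph Phi phi b = embedmx Phi (map_mx phi (Ph b)).
Proof. by congr Phi; apply/matrixP => i j; rewrite !mxE. Qed.

Lemma phi_sum (I : Type) (r : seq I) (F : I -> B) :
  phi (\sum_(i <- r) F i) = \sum_(i <- r) phi (F i).
Proof.
case: phi_state => phiD phiZ _ _; apply: (big_morph phi phiD).
by rewrite -(scale0r 0) phiZ mul0r.
Qed.

Lemma map_phi_mull {p} (U : 'M[C]_(p, N)) (M : 'M[B]_N) :
  map_mx phi (map_mx (in_alg B) U *m M) = U *m map_mx phi M.
Proof.
case: phi_state => _ phiZ _ _.
apply/matrixP => i j; rewrite !mxE phi_sum; apply: eq_bigr => k _.
by rewrite !mxE /= mulr_algl phiZ.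
Qed.

Lemma map_phi_mulr {p} (M : 'M[B]_(p, N)) (V : 'M[C]_N) :
  map_mx phi (M *m map_mx (in_alg B) V) = map_mx phi M *m V.
Proof.
case: phi_state => _ phiZ _ _.
apply/matrixP => i j; rewrite !mxE phi_sum; apply: eq_bigr => k _.
by rewrite !mxE /= mulr_algr phiZ mulrC.
Qed.

Lemma cond_exp_embedmx Q : cond_exp Ph Phi phi (embedmx Phi Q) = embedmx Phi Q.
Proof.
case: phi_state => _ phiZ phi1 _.
rewrite cond_expE Ph_embedmx; congr (embedmx Phi).
by apply/matrixP => i j; rewrite !mxE /= phiZ phi1 mulr1.
Qed.

Lemma cond_expD b1 b2 :
  cond_exp Ph Phi phi (b1 + b2) = cond_exp Ph Phi phi b1 + cond_exp Ph Phi phi b2.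
Proof.
case: phi_state => phiD _ _ _.
rewrite !cond_expE PhD -embedmxD; congr (embedmx Phi).
by apply/matrixP => i j; rewrite !mxE phiD.
Qed.

Section Corner.
Variable t0 : 'I_N.
Local Notation e0 := (delta_mx t0 0 : 'cV[C]_N).

Lemma nrm_embedmx_col v : (nrm (embedmx Phi (v *m e0^t*)) ^+ 2)%:C <= cnorm2 v.
Proof.
rewrite -nrm_cstar embedmx_star embedmxM trmx_mul map_mxM trmxCK.
rewrite mulmxA -(mulmxA e0) [_ *m v]mx11_scalar mul_mx_scalar -scalemxAl.
rewrite trmxC_delta mul_delta_mx embedmxZ nrmZ ger0_norm ?cnorm2_ge0 //.
have cv_real := ger0_real (cnorm2_ge0 v).
rewrite -[X in _ <= X](RRe_real cv_real) lecR ler_piMr ?nrm_embedmx_delta //.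
by rewrite -ler0c (RRe_real cv_real) cnorm2_ge0.
Qed.

Lemma corner_state : is_state star (fun z => phi (Ph z t0 t0)).
Proof.
case: phi_state => phiD phiZ phi1 phi_ge0; split => [x y | a x | | x].
- by rewrite PhD mxE phiD.
- by rewrite PhZ mxE phiZ.
- by rewrite Ph1 mxE eqxx mulr1n phi1.
- by rewrite PhM Ph_star mxE phi_sum sumr_ge0 // => k _; rewrite mxE.
Qed.

Lemma corner_entry (s : 'M[C]_1) : (e0 *m s *m e0^t*) t0 t0 = s 0 0.
Proof.
rewrite [s]mx11_scalar mul_mx_scalar -scalemxAl trmxC_delta mul_delta_mx.
by rewrite mxE !mxE !eqxx mulr1.
Qed.

Lemma corner_stateE b eta xi :
  phi (Ph (embedmx Phi (e0 *m eta^t*) * b * embedmx Phi (xi *m e0^t*)) t0 t0) =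
  (eta^t* *m map_mx phi (Ph b) *m xi) 0 0.
Proof.
rewrite !PhM !Ph_embedmx.
have := map_phi_mulr (map_mx (in_alg B) (e0 *m eta^t*) *m Ph b) (xi *m e0^t*).
rewrite map_phi_mull => /matrixP /(_ t0 t0); rewrite mxE => ->.
by rewrite !mulmxA -2!(mulmxA e0) corner_entry.
Qed.

Lemma form_cond_exp_le b eta xi :
  `|(eta^t* *m map_mx phi (Ph b) *m xi) 0 0| ^+ 2 <=
    (nrm b ^+ 2)%:C * cnorm2 eta * cnorm2 xi.
Proof.
set l := embedmx Phi (e0 *m eta^t*); set r := embedmx Phi (xi *m e0^t*).
have hl : (nrm l ^+ 2)%:C <= cnorm2 eta.
  by rewrite -nrm_star embedmx_star trmx_mul map_mxM trmxCK nrm_embedmx_col.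
have hr : (nrm r ^+ 2)%:C <= cnorm2 xi := nrm_embedmx_col xi.
have lbr : nrm (l * b * r) ^+ 2 <= nrm l ^+ 2 * nrm b ^+ 2 * nrm r ^+ 2.
  rewrite -!exprMn ler_pXn2r ?nnegrE ?mulr_ge0 ?nrm_ge0 //.
  by apply: le_trans (nrmM _ _) _; rewrite ler_wpM2r ?nrm_ge0 ?nrmM.
rewrite -corner_stateE.
apply: (@le_trans _ _ (nrm (l * b * r) ^+ 2)%:C).
  rewrite realcX ler_pXn2r ?nnegrE ?normr_ge0 ?ler0c ?nrm_ge0 //.
  exact: normr_state_le _ corner_state _.
apply: (@le_trans _ _ (nrm l ^+ 2 * nrm b ^+ 2 * nrm r ^+ 2)%:C); first by rewrite lecR.
rewrite (realcM (_ * _)) (realcM (nrm l ^+ 2)) (mulrC (nrm l ^+ 2)%:C).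
by rewrite ler_pM ?mulr_ge0 ?ler_wpM2l ?ler0c ?exprn_ge0 ?nrm_ge0.
Qed.

End Corner.

Lemma nrm_cond_exp_le b : nrm (cond_exp Ph Phi phi b) <= nrm b.
Proof.
have [N0 | Npos] := posnP N.
  have no_index : 'I_N -> False by case=> i; rewrite N0.
  rewrite /cond_exp (_ : map_mx _ _ = Ph b) ?PhK //.
  by apply/matrixP => i; case: (no_index i).
rewrite cond_expE; apply: nrm_embedmx_le (nrm_ge0 b) _ => eta xi.
exact: form_cond_exp_le (Ordinal Npos) b eta xi.
Qed.

End CondExp.
End MatrixUnits.

Section IteratedIso.
Context {n : nat} {psi : B -> 'M[B]_n} {psiinv : 'M[B]_n -> B}.
Hypothesis psi_iso : is_star_iso star psi psiinv.

Lemma eq_psi_it_inv m (X Y : idx n m -> idx n m -> B) :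
  (forall i j, X i j = Y i j) -> psi_it_inv psiinv m X = psi_it_inv psiinv m Y.
Proof.
elim: m X Y => [|m IHm] X Y XY /=; first exact: XY.
by apply: IHm => i j; congr psiinv; apply/matrixP => k l; rewrite !mxE XY.
Qed.

Lemma psi_it_invK m X i j : psi_it psi m (psi_it_inv psiinv m X) i j = X i j.
Proof.
elim: m X i j => [|m IHm] X /=; first by do 2!case.
by case=> i a [j c] /=; rewrite IHm (PhiK psi_iso) mxE.
Qed.

Lemma psi_itK m b : psi_it_inv psiinv m (psi_it psi m b) = b.
Proof.
elim: m b => [|m IHm] b //=; rewrite -[RHS]IHm; apply: eq_psi_it_inv => i j.
by rewrite -[RHS](PhK psi_iso); congr psiinv; apply/matrixP => k l; rewrite mxE.
Qed.

Lemma psi_itD m x y i j :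
  psi_it psi m (x + y) i j = psi_it psi m x i j + psi_it psi m y i j.
Proof.
by elim: m i j => [|m IHm] //= [i a] [j c]; rewrite IHm (PhD psi_iso) mxE.
Qed.

Lemma psi_itZ m (a : C) x i j : psi_it psi m (a *: x) i j = a *: psi_it psi m x i j.
Proof.
by elim: m i j => [|m IHm] //= [i k] [j c]; rewrite IHm (PhZ psi_iso) mxE.
Qed.

Lemma psi_it_star m x i j : psi_it psi m (star x) i j = star (psi_it psi m x j i).
Proof.
by elim: m i j => [|m IHm] //= [i k] [j c]; rewrite IHm (Ph_star psi_iso) mxE.
Qed.

Lemma psi_it1 m (t u : idx_fin n m) :
  psi_it psi m 1 (idx_of_fin t) (idx_of_fin u) = (t == u)%:R.
Proof.
elim: m t u => [|m IHm] /=; first by do 2!case.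
case=> t a [u c] /=; rewrite IHm xpair_eqE.
by case: (t == u); rewrite ?(Ph1 psi_iso) ?(Ph0 psi_iso) mxE.
Qed.

Lemma psi_itM m x y (t u : idx_fin n m) :
  psi_it psi m (x * y) (idx_of_fin t) (idx_of_fin u) =
  \sum_k psi_it psi m x (idx_of_fin t) (idx_of_fin k) *
         psi_it psi m y (idx_of_fin k) (idx_of_fin u).
Proof.
elim: m t u => [|m IHm] /=; first by move=> t u; rewrite (big_pred1 tt) // => -[].
case=> t a [u c] /=; rewrite IHm (Ph_sum psi_iso) summxE.
pose F k d := psi (psi_it psi m x (idx_of_fin t) (idx_of_fin k)) a d *
               psi (psi_it psi m y (idx_of_fin k) (idx_of_fin u)) d c.
rewrite (eq_bigr (fun k => \sum_d F k d)) => [|k _]; last by rewrite (PhM psi_iso) mxE.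
exact: (pair_bigA _ F).
Qed.

Lemma psi_mx_star_iso m : is_star_iso star (psi_mx psi m) (psi_mx_inv psiinv m).
Proof.
split.
- by split=> [x y | a x]; apply/matrixP => i j; rewrite !mxE ?psi_itD ?psi_itZ.
- move=> x y; apply/matrixP => i j; rewrite !mxE psi_itM.
  rewrite (reindex (fun k : 'I_#|idx_fin n m| => enum_val k)) /=; last first.
    by exists enum_rank => k _; rewrite ?enum_valK ?enum_rankK.
  by apply: eq_bigr => k _; rewrite !mxE.
- by move=> x; apply/matrixP => i j; rewrite !mxE psi_it_star.
- split=> [b | M].
    rewrite -[RHS](psi_itK m); apply: eq_psi_it_inv => i j.
    by rewrite mxE !enum_rankK !fin_of_idxK.
  by apply/matrixP => i j; rewrite mxE psi_it_invK !idx_of_finK !enum_valK.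
- by apply/matrixP => i j; rewrite !mxE psi_it1 (inj_eq enum_val_inj).
Qed.

Lemma kappa_phi_it m phi c :
  kappa psiinv m (phi_it psi phi m c) =
  cond_exp (psi_mx psi m) (psi_mx_inv psiinv m) phi c.
Proof. by apply: eq_psi_it_inv => i j; rewrite !mxE !enum_rankK !fin_of_idxK. Qed.

Lemma kappa_embedmx m x :
  kappa psiinv m x = embedmx (psi_mx_inv psiinv m)
    (\matrix_(i, j) x (idx_of_fin (enum_val i)) (idx_of_fin (enum_val j))).
Proof. by apply: eq_psi_it_inv => i j; rewrite !mxE !enum_rankK !fin_of_idxK. Qed.

End IteratedIso.
End CStarAlgebra.

Theorem proposition3p9 (R : realType) (B : algType R[i]) (star : B -> B) (nrm : B -> R)
  (n : nat) (psi : B -> 'M[B]_n) (psiinv : 'M[B]_n -> B)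
  (A : B -> Prop) (phi : B -> R[i]) :
  is_unital_cstar star nrm ->
  is_star_iso star psi psiinv ->
  masa star A ->
  unital_hom_on A phi ->
  pos_contraction star nrm phi ->
  forall c : B, in_C nrm psiinv c ->
  forall e : R, 0 < e ->
  exists m : nat, (1 <= m)%N /\ nrm (kappa psiinv m (phi_it psi phi m c) - c) < e.
Proof.
move=> cstar psi_iso _ [phi1 _] [phiD phiZ phi_ge0 _] c c_in_C e e0.
have phi_state : is_state star phi by [].
have [m [m1 [x cx]]] := c_in_C (e / 2) (divr_gt0 e0 (ltr0n _ 2)).
exists m; split => //.
have iso := psi_mx_star_iso psi_iso m.
rewrite kappa_phi_it.
set d := kappa psiinv m x in cx *.
have Ed : cond_exp (psi_mx psi m) (psi_mx_inv psiinv m) phi d = d.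
  by rewrite /d kappa_embedmx (cond_exp_embedmx iso phi_state).
rewrite -{1}[c](subrK d) (cond_expD iso phi_state) Ed -addrA.
apply: le_lt_trans (nrmD cstar _ _) _.
have := nrm_cond_exp_le cstar iso phi_state (c - d).
rewrite (nrmB cstar c d); lra.
Qed.
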